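(* Let $A\in B_\infty(L)$, let $\{e_j\}_{j\in\mathbb N}$ be a complete orthonormal system in $L$, and $\Delta_M(A):=\sum_{j=1}^M a(Ae_j)a(\bar e_j)$. Then for every $\Phi\in\mathcal F_0$ the limit $\Delta(A)\Phi:=\lim_{M\to\infty}\Delta_M(A)\Phi$ exists, and for $n\in\mathbb N_0$, $g_1,\dots,g_n\in L$, \[ \Delta(A)\,a^\dagger(g_n)\cdots a^\dagger(g_1)\Omega=\sum_{\substack{k,l=1\\k\neq l}}^n(\bar g_l,Ag_k)\Big(\prod_{m\in\{1,\dots,n\}\setminus\{k,l\}}a^\dagger(g_m)\Big)\Omega , \] where the product is over the creation operators $a^\dagger(g_m)$, $m\ne k,l$ (which commute, so the order is irrelevant), and the sum is zero for $n<2$.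
   Context: $L$ is a separable complex Hilbert space with $\dim L=\infty$, scalar product antilinear in the first argument, and a conjugation $f\mapsto\bar f$ (antilinear involution with $(\bar f,\bar g)=(g,f)$). $B_\infty(L)$ denotes the bounded operators on $L$. $\mathcal F$ carries a Fock representation of the CCR over $L$: on a dense invariant domain $D$ there are operators $a(f),a^\dagger(f)$, linear in $f$, with $[a(f),a(g)]=0=[a^\dagger(f),a^\dagger(g)]$, $[a(f),a^\dagger(g)]=(\bar f,g)\mathrm{id}$, $(a(f)\Phi,\Psi)=(\Phi,a^\dagger(\bar f)\Psi)$, a unit vacuum $\Omega$ with $a(f)\Omega=0$, and $\mathcal F$ is the closure of $\mathcal F_0:=\operatorname{span}\{a^\dagger(f_n)\cdots a^\dagger(f_1)\Omega: n\in\mathbb N_0, f_i\in L\}$. *)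

From HB Require Import structures.
From mathcomp Require Import all_boot all_order all_algebra.
From mathcomp Require Import complex.
From mathcomp Require Import boolp classical_sets reals.
Set Implicit Arguments. Unset Strict Implicit. Unset Printing Implicit Defensive.
Import Order.TTheory GRing.Theory Num.Theory.
Local Open Scope ring_scope.

Section Defs.
Variable R : realType.
Local Notation C := (R[i]).

(* An inner product, antilinear in the first argument, linear in the second. *)
Definition inner_product (V : lmodType C) (ip : V -> V -> C) : Prop :=
  [/\ (forall x y z (c : C), ip x (c *: y + z) = c * ip x y + ip x z),
      (forall x y, ip y x = (ip x y)^*),
      (forall x, 0 <= ip x x) &
      (forall x, ip x x = 0 -> x = 0)].

Definition ipnorm (V : lmodType C) (ip : V -> V -> C) (x : V) : C :=
  sqrtC (ip x x).

Definition ip_cvg (V : lmodType C) (ip : V -> V -> C) (u : nat -> V) (l : V) : Prop :=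
  forall eps : C, 0 < eps ->
    exists N : nat, forall M : nat, (N <= M)%N -> ipnorm ip (u M - l) < eps.

Definition ip_complete (V : lmodType C) (ip : V -> V -> C) : Prop :=
  forall u : nat -> V,
    (forall eps : C, 0 < eps -> exists N : nat, forall m n : nat,
        (N <= m)%N -> (N <= n)%N -> ipnorm ip (u m - u n) < eps) ->
    exists l : V, ip_cvg ip u l.

Definition hilbert (V : lmodType C) (ip : V -> V -> C) : Prop :=
  inner_product ip /\ ip_complete ip.

Definition conjugation (V : lmodType C) (ip : V -> V -> C) (cj : V -> V) : Prop :=
  [/\ (forall (c : C) x y, cj (c *: x + y) = c^* *: cj x + cj y),
      (forall x, cj (cj x) = x) &
      (forall x y, ip (cj x) (cj y) = ip y x)].

Definition bounded_op (V : lmodType C) (ip : V -> V -> C) (A : V -> V) : Prop :=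
  (forall (c : C) x y, A (c *: x + y) = c *: A x + A y) /\
  (exists K : C, 0 <= K /\ forall x, ipnorm ip (A x) <= K * ipnorm ip x).

Definition complete_ONS (V : lmodType C) (ip : V -> V -> C) (e : nat -> V) : Prop :=
  (forall i j : nat, ip (e i) (e j) = (i == j)%:R) /\
  (forall (f : V) (eps : C), 0 < eps ->
     exists (N : nat) (c : nat -> C),
       ipnorm ip (f - \sum_(j < N) c j *: e j) < eps).

(* a^dagger(g_{n-1}) ... a^dagger(g_0) Omega  (the paper's g_1..g_n are g 0 .. g (n-1)) *)
Fixpoint creat (L F : Type) (ad : L -> F -> F) (Om : F) (g : nat -> L) (n : nat) : F :=
  match n with
  | 0 => Om
  | m.+1 => ad (g m) (creat ad Om g m)
  end.

Fixpoint creat_except (L F : Type) (ad : L -> F -> F) (Om : F) (g : nat -> L)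
    (k l : nat) (n : nat) : F :=
  match n with
  | 0 => Om
  | m.+1 => if (m == k) || (m == l) then creat_except ad Om g k l m
            else ad (g m) (creat_except ad Om g k l m)
  end.

Definition inF0 (L F : lmodType C) (ad : L -> F -> F) (Om : F) (Phi : F) : Prop :=
  exists (p : nat) (c : 'I_p -> C) (ns : 'I_p -> nat) (gs : 'I_p -> nat -> L),
    Phi = \sum_(i < p) c i *: creat ad Om (gs i) (ns i).

Definition fock_rep (L F : lmodType C) (ipL : L -> L -> C) (cj : L -> L)
    (ipF : F -> F -> C) (a ad : L -> F -> F) (D : set F) (Om : F) : Prop :=
  [/\
      [/\ D 0, (forall (c : C) x y, D x -> D y -> D (c *: x + y)),
          (forall f x, D x -> D (a f x)), (forall f x, D x -> D (ad f x)) &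
          (forall x (eps : C), 0 < eps -> exists y, D y /\ ipnorm ipF (x - y) < eps)],
      [/\ (forall f (c : C) x y, D x -> D y -> a f (c *: x + y) = c *: a f x + a f y),
          (forall f (c : C) x y, D x -> D y -> ad f (c *: x + y) = c *: ad f x + ad f y),
          (forall (c : C) f g x, D x -> a (c *: f + g) x = c *: a f x + a g x) &
          (forall (c : C) f g x, D x -> ad (c *: f + g) x = c *: ad f x + ad g x)],
      [/\ (forall f g x, D x -> a f (a g x) = a g (a f x)),
          (forall f g x, D x -> ad f (ad g x) = ad g (ad f x)) &
          (forall f g x, D x -> a f (ad g x) - ad g (a f x) = ipL (cj f) g *: x)],
      (forall f x y, D x -> D y -> ipF (a f x) y = ipF x (ad (cj f) y)) &
      [/\ D Om, ipF Om Om = 1 & (forall f, a f Om = 0)]] /\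
      (forall x (eps : C), 0 < eps ->
         exists y, inF0 ad Om y /\ ipnorm ipF (x - y) < eps).

(* Delta_M(A) = sum_{j=1}^M a(A e_j) a(conj e_j)  (indices shifted to 0..M-1) *)
Definition DeltaM (L F : lmodType C) (cj : L -> L) (a : L -> F -> F)
    (A : L -> L) (e : nat -> L) (M : nat) (Phi : F) : F :=
  \sum_(j < M) a (A (e j)) (a (cj (e j)) Phi).

End Defs.

(* By the CCR, a(f) applied to a^dagger(g_n)...a^dagger(g_1)Omega
   is the sum over k of (cj f, g_k) times the product with factor k removed.
   Applying this twice, Delta_M(A) contracts every ordered pair k <> l with
   coefficient sum_(j < M) (e_j, g_k) (cj (A e_j), g_l) = (cj g_l, A P_M g_k),
   where P_M g = sum_(j < M) (e_j, g) e_j. So Delta_M(A) is the claimed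
   expression with A replaced by A P_M, and convergence follows from
   P_M g --> g (best approximation and density of the span of the e_j),
   boundedness of A and Cauchy-Schwarz. Delta_M(A) is linear on the domain,
   which carries the limit over to all of F_0. *)

From HB Require Import structures.
From mathcomp Require Import all_boot all_order all_algebra.
From mathcomp Require Import complex.
From mathcomp Require Import boolp classical_sets reals.
From mathcomp Require Import ring.
Set Implicit Arguments.
Unset Strict Implicit.
Unset Printing Implicit Defensive.

Import Order.TTheory GRing.Theory Num.Theory.
Local Open Scope ring_scope.

Section LinearOn.
Context {K : pzRingType} {U W : lmodType K}.

Definition subspace (D : set U) : Prop :=
  D 0 /\ forall (c : K) x y, D x -> D y -> D (c *: x + y).

Definition linear_on (D : set U) (T : U -> W) : Prop :=
  forall (c : K) x y, D x -> D y -> T (c *: x + y) = c *: T x + T y.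

Lemma subspaceT : subspace setT. Proof. by []. Qed.

Variables (D : set U) (T : U -> W).
Hypotheses (hD : subspace D) (hT : linear_on D T).

Lemma subspaceD x y : D x -> D y -> D (x + y).
Proof. by move=> hx hy; have := hD.2 1 _ _ hx hy; rewrite scale1r. Qed.

Lemma subspaceZ c x : D x -> D (c *: x).
Proof. by move=> hx; have := hD.2 c _ _ hx hD.1; rewrite addr0. Qed.

Lemma linear_on0 : T 0 = 0.
Proof.
have := hT 1 hD.1 hD.1; rewrite !scale1r addr0 -{1}[T 0]addr0 => /addrI.
by move<-.
Qed.

Lemma linear_onD x y : D x -> D y -> T (x + y) = T x + T y.
Proof. by move=> hx hy; have := hT 1 hx hy; rewrite !scale1r. Qed.

Lemma linear_onZ c x : D x -> T (c *: x) = c *: T x.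
Proof. by move=> hx; have := hT c hx hD.1; rewrite !addr0 linear_on0 addr0. Qed.

Lemma linear_onN x : D x -> T (- x) = - T x.
Proof. by move=> hx; rewrite -!scaleN1r linear_onZ. Qed.

Lemma linear_onB x y : D x -> D y -> T (x - y) = T x - T y.
Proof. by move=> hx hy; have := hT (-1) hy hx; rewrite !scaleN1r addrC [_ + T x]addrC. Qed.

Lemma linear_on_sum I (r : seq I) (P : pred I) (f : I -> U) :
  (forall i, P i -> D (f i)) ->
  T (\sum_(i <- r | P i) f i) = \sum_(i <- r | P i) T (f i).
Proof.
move=> hf; pose Q x y := D x /\ T x = y.
suff [] : Q (\sum_(i <- r | P i) f i) (\sum_(i <- r | P i) T (f i)) by [].
apply: big_rec2 => [|i x y Pi [Dx <-]]; first by split; [exact: hD.1 | exact: linear_on0].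
by split; [apply: subspaceD; first exact: hf | rewrite linear_onD //; exact: hf].
Qed.

End LinearOn.

Lemma mul_lt_of_lt_divD1 (K : numFieldType) (x k eps : K) :
  0 <= x -> 0 <= k -> x < eps / (k + 1) -> x * k < eps.
Proof.
move=> x_ge0 k_ge0 lt_x; have k1_gt0 : 0 < k + 1 by rewrite ltr_wpDl.
apply: (@le_lt_trans _ _ (x * (k + 1))); first by rewrite ler_wpM2l // lerDl.
by rewrite -ltr_pdivlMr.
Qed.

Lemma sqr_le_of_sqrtC_le (K : numClosedFieldType) (x b : K) :
  0 <= x -> 0 <= b -> sqrtC x <= b -> x <= b ^+ 2.
Proof. by move=> x_ge0 b_ge0; rewrite -{1}(sqrCK b_ge0) ler_sqrtC ?nnegrE ?exprn_ge0. Qed.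

Lemma sqr_lt_of_sqrtC_lt (K : numClosedFieldType) (x b : K) :
  0 <= x -> 0 <= b -> sqrtC x < b -> x < b ^+ 2.
Proof. by move=> x_ge0 b_ge0; rewrite -{1}(sqrCK b_ge0) ltr_sqrtC ?nnegrE ?exprn_ge0. Qed.

Definition scalar_vanishes {R : realType} (c : nat -> R[i]) : Prop :=
  forall eps : R[i], 0 < eps -> exists N, forall M, (N <= M)%N -> `|c M| ^+ 2 < eps.

Definition vanishes {R : realType} {V : lmodType R[i]} (ip : V -> V -> R[i])
    (u : nat -> V) : Prop :=
  forall eps : R[i], 0 < eps ->
    exists N, forall M, (N <= M)%N -> ip (u M) (u M) < eps.

Definition fourier_sum {R : realType} {V : lmodType R[i]} (ip : V -> V -> R[i])
    (e : nat -> V) (M : nat) (g : V) : V :=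
  \sum_(j < M) ip (e j) g *: e j.

Section InnerProduct.
Context {R : realType} {V : lmodType R[i]} {ip : V -> V -> R[i]}.
Hypothesis hip : inner_product ip.

Lemma ipDr x y z : ip x (y + z) = ip x y + ip x z.
Proof. by case: hip => h _ _ _; have := h x y z 1; rewrite scale1r mul1r. Qed.

Lemma ip0r x : ip x 0 = 0.
Proof. by have := ipDr x 0 0; rewrite addr0 -{1}[ip x 0]addr0 => /addrI <-. Qed.

Lemma ipZr x c y : ip x (c *: y) = c * ip x y.
Proof. by case: hip => h _ _ _; have := h x y 0 c; rewrite !addr0 ip0r addr0. Qed.

Lemma ipNr x y : ip x (- y) = - ip x y.
Proof. by rewrite -scaleN1r ipZr mulN1r. Qed.

Lemma ipBr x y z : ip x (y - z) = ip x y - ip x z.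
Proof. by rewrite ipDr ipNr. Qed.

Lemma ipC x y : ip y x = (ip x y)^*.
Proof. by case: hip. Qed.

Lemma ipDl x y z : ip (y + z) x = ip y x + ip z x.
Proof. by rewrite ipC ipDr rmorphD [ip y x]ipC [ip z x]ipC. Qed.

Lemma ipZl x c y : ip (c *: y) x = c^* * ip y x.
Proof. by rewrite ipC ipZr rmorphM [ip y x]ipC. Qed.

Lemma ipNl x y : ip (- y) x = - ip y x.
Proof. by rewrite ipC ipNr rmorphN [ip y x]ipC. Qed.

Lemma ipBl x y z : ip (y - z) x = ip y x - ip z x.
Proof. by rewrite ipDl ipNl. Qed.

Lemma ip0l x : ip 0 x = 0.
Proof. by rewrite ipC ip0r conjC0. Qed.

Lemma ip_sumr x I (r : seq I) (P : pred I) (f : I -> V) :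
  ip x (\sum_(i <- r | P i) f i) = \sum_(i <- r | P i) ip x (f i).
Proof. exact: (big_morph (ip x) (ipDr x) (ip0r x)). Qed.

Lemma ip_suml x I (r : seq I) (P : pred I) (f : I -> V) :
  ip (\sum_(i <- r | P i) f i) x = \sum_(i <- r | P i) ip (f i) x.
Proof. exact: (big_morph (ip^~ x) (fun y z => ipDl x y z) (ip0l x)). Qed.

Lemma ip_self_ge0 x : 0 <= ip x x.
Proof. by case: hip. Qed.

Lemma ip_self_eq0 x : ip x x = 0 -> x = 0.
Proof. by case: hip => _ _ _; apply. Qed.

Lemma conj_ip_self x : (ip x x)^* = ip x x.
Proof. exact/conj_Creal/ger0_real/ip_self_ge0. Qed.

Lemma ip_selfZ c x : ip (c *: x) (c *: x) = `|c| ^+ 2 * ip x x.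
Proof. by rewrite ipZl ipZr mulrA normCKC. Qed.

Lemma ip_selfD_le x y : ip (x + y) (x + y) <= 2 * (ip x x + ip y y).
Proof.
have -> : ip (x + y) (x + y) = 2 * (ip x x + ip y y) - ip (x - y) (x - y).
  by rewrite !(ipDl, ipDr, ipNl, ipNr); ring.
by rewrite gerBl ip_self_ge0.
Qed.

Lemma cauchy_schwarz x y : `|ip x y| ^+ 2 <= ip x x * ip y y.
Proof.
have [->|yn0] := eqVneq y 0; first by rewrite !ip0r normr0 expr0n mulr0.
have yy_gt0 : 0 < ip y y.
  by rewrite lt_def ip_self_ge0 andbT; apply: contra_neq yn0; apply: ip_self_eq0.
have := ip_self_ge0 (x - (ip y x / ip y y) *: y).
have conj_t : (ip y x / ip y y)^* = ip x y / ip y y.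
  by rewrite [in RHS]ipC -[in RHS]conj_ip_self -fmorph_div.
rewrite !ipBl !ipBr !ipZl !ipZr conj_t normCKC -ipC.
have yy_neq0 : ip y y != 0 by rewrite lt0r_neq0.
have -> : ip x x - ip y x / ip y y * ip x y -
  (ip x y / ip y y * ip y x - ip x y / ip y y * (ip y x / ip y y * ip y y))
   = (ip x x * ip y y - ip x y * ip y x) / ip y y by field.
by rewrite pmulr_lge0 ?invr_gt0 // subr_ge0 mulrC.
Qed.

Lemma vanishes0 : vanishes ip (fun _ => 0).
Proof. by move=> eps eps_gt0; exists 0%N => M _; rewrite ip0r. Qed.

Lemma vanishesD u v : vanishes ip u -> vanishes ip v -> vanishes ip (fun M => u M + v M).
Proof.
move=> hu hv eps eps_gt0.
have eps4_gt0 : 0 < eps / 4 by rewrite divr_gt0 // ltr0n.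
have [N1 h1] := hu _ eps4_gt0; have [N2 h2] := hv _ eps4_gt0.
exists (maxn N1 N2) => M; rewrite geq_max => /andP[hM1 hM2].
apply: le_lt_trans (ip_selfD_le _ _) _.
have -> : eps = 2 * (eps / 4 + eps / 4) by field.
by rewrite ltr_pM2l ?ltr0n // ltrD ?h1 ?h2.
Qed.

Lemma vanishes_sum I (r : seq I) (P : pred I) (f : I -> nat -> V) :
  (forall i, P i -> vanishes ip (f i)) -> vanishes ip (fun M => \sum_(i <- r | P i) f i M).
Proof.
move=> hf; elim: r => [|i r IH].
  by under [fun M => _]funext => M do rewrite big_nil; exact: vanishes0.
under [fun M => _]funext => M do rewrite big_cons.
by case: (boolP (P i)) => // Pi; apply: vanishesD => //; apply: hf.
Qed.

Lemma vanishesZl (c : nat -> R[i]) x : scalar_vanishes c -> vanishes ip (fun M => c M *: x).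
Proof.
move=> hc eps eps_gt0.
have [|N hN] := hc (eps / (ip x x + 1)); first by rewrite divr_gt0 // ltr_wpDl ?ip_self_ge0.
exists N => M hM; rewrite ip_selfZ.
by apply: mul_lt_of_lt_divD1; rewrite ?ip_self_ge0 ?exprn_ge0 ?hN.
Qed.

Lemma vanishesZr (c : R[i]) u : vanishes ip u -> vanishes ip (fun M => c *: u M).
Proof.
move=> hu eps eps_gt0.
have [|N hN] := hu (eps / (`|c| ^+ 2 + 1)); first by rewrite divr_gt0 // ltr_wpDl ?exprn_ge0.
exists N => M hM; rewrite ip_selfZ mulrC.
by apply: mul_lt_of_lt_divD1; rewrite ?ip_self_ge0 ?exprn_ge0 ?hN.
Qed.

Lemma vanishes_cvg u l : vanishes ip (fun M => u M - l) -> ip_cvg ip u l.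
Proof.
move=> hu eps eps_gt0; have [N hN] := hu _ (exprn_gt0 2 eps_gt0).
exists N => M /hN; rewrite /ipnorm -ltr_sqrtC ?nnegrE ?ip_self_ge0 ?exprn_ge0 ?ltW //.
by rewrite sqrCK ?ltW.
Qed.

Section Fourier.
Context {e : nat -> V}.
Hypothesis e_orthonormal : forall i j : nat, ip (e i) (e j) = (i == j)%:R.

Lemma ip_fourier_sum i M g : (i < M)%N -> ip (e i) (fourier_sum ip e M g) = ip (e i) g.
Proof.
move=> lt_iM; rewrite ip_sumr (bigD1 (Ordinal lt_iM)) //= ipZr e_orthonormal eqxx.
rewrite mulr1 big1 ?addr0 // => j /eqP neq_ji; rewrite ipZr e_orthonormal.
by case: eqP => [eq_ij|]; [case: neq_ji; apply: val_inj | rewrite mulr0].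
Qed.

Lemma fourier_sum_best (c : nat -> R[i]) g M N : (N <= M)%N ->
  ip (g - fourier_sum ip e M g) (g - fourier_sum ip e M g) <=
  ip (g - \sum_(j < N) c j *: e j) (g - \sum_(j < N) c j *: e j).
Proof.
move=> le_NM; set w := g - fourier_sum ip e M g.
set s := fourier_sum ip e M g - \sum_(j < N) c j *: e j.
have -> : g - \sum_(j < N) c j *: e j = w + s by rewrite addrA subrK.
(* Pythagoras: s lies in the span of e_0, ..., e_(M-1), to which w is orthogonal. *)
have orth_sw : ip s w = 0.
  rewrite ipBl !ip_suml !big1 ?subr0 // => j _;
    rewrite ipZl ipBr ip_fourier_sum ?subrr ?mulr0 //.
  exact: leq_trans (ltn_ord j) le_NM.
have orth_ws : ip w s = 0 by rewrite ipC orth_sw conjC0.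
clearbody w s.
by rewrite ipDl !ipDr orth_sw orth_ws addr0 add0r lerDl ip_self_ge0.
Qed.

End Fourier.

Lemma fourier_sum_vanishes e g :
  complete_ONS ip e -> vanishes ip (fun M => g - fourier_sum ip e M g).
Proof.
move=> [e_orthonormal e_dense] eps eps_gt0.
have [|N [c hN]] := e_dense g (sqrtC eps); first by rewrite sqrtC_gt0.
exists N => M le_NM.
apply: le_lt_trans (fourier_sum_best e_orthonormal c g le_NM) _.
rewrite -[eps]sqrtCK; apply: sqr_lt_of_sqrtC_lt; rewrite ?ip_self_ge0 ?sqrtC_ge0 ?ltW //.
Qed.

End InnerProduct.

Section CCR.
Context {K : pzRingType} {L F : lmodType K}.

Record ccr_rep (ipL : L -> L -> K) (cj : L -> L) (a ad : L -> F -> F)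
    (D : set F) (Om : F) : Prop := CcrRep {
  ccr_subspace : subspace D;
  ccr_domain_a : forall f x, D x -> D (a f x);
  ccr_domain_ad : forall f x, D x -> D (ad f x);
  ccr_linear_a : forall f, linear_on D (a f);
  ccr_linear_ad : forall f, linear_on D (ad f);
  ccr_commutator : forall f g x, D x -> a f (ad g x) - ad g (a f x) = ipL (cj f) g *: x;
  ccr_vacuum_domain : D Om;
  ccr_vacuum : forall f, a f Om = 0 }.

Variables (ipL : L -> L -> K) (cj : L -> L) (a ad : L -> F -> F) (D : set F) (Om : F).
Local Notation cr := (creat ad Om).
Local Notation ce := (creat_except ad Om).

Lemma creat_exceptC g k l n : ce g k l n = ce g l k n.
Proof. by elim: n => //= n IH; rewrite orbC IH. Qed.

Lemma creat_except_geq g k l n : (n <= k)%N -> ce g k l n = ce g l l n.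
Proof.
elim: n => //= n IH lt_nk; have -> : (n == k) = false by rewrite ltn_eqF.
by rewrite orbb IH // ltnW.
Qed.

Lemma creat_except_creat g l n : (n <= l)%N -> ce g l l n = cr g n.
Proof.
elim: n => //= n IH lt_nl; have -> : (n == l) = false by rewrite ltn_eqF.
by rewrite IH // ltnW.
Qed.

Hypothesis hccr : ccr_rep ipL cj a ad D Om.

Lemma D_creat g n : D (cr g n).
Proof.
elim: n => /= [|n IH]; first exact: ccr_vacuum_domain hccr.
exact: (ccr_domain_ad hccr).
Qed.

Lemma D_creat_except g k l n : D (ce g k l n).
Proof.
elim: n => /= [|n IH]; first exact: ccr_vacuum_domain hccr.
by case: ifP => _ //; exact: (ccr_domain_ad hccr).
Qed.

Lemma a_adE f g x : D x -> a f (ad g x) = ad g (a f x) + ipL (cj f) g *: x.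
Proof. by move=> Dx; rewrite -(ccr_commutator hccr) // addrC subrK. Qed.

(* [ce g l l n] is the product with only the factor [l] omitted; stating the
   lemma for it rather than for [cr g n] lets it also handle the second
   annihilator of Delta_M. *)
Lemma a_creat_except f g l n :
  a f (ce g l l n) = \sum_(k < n | (k : nat) != l) ipL (cj f) (g k) *: ce g k l n.
Proof.
elim: n => [|n IH]; first by rewrite big_ord0 /= (ccr_vacuum hccr).
rewrite big_mkcond big_ord_recr /= orbb.
have [eq_nl|neq_nl] := eqVneq n l.
  subst l; rewrite eqxx /= addr0 IH big_mkcond; apply: eq_bigr => k _.
  by rewrite orbT.
have hD := ccr_subspace hccr; have ad_lin := ccr_linear_ad hccr (g n).
rewrite a_adE; last exact: D_creat_except.
rewrite IH eqxx (creat_except_geq g l (leqnn n)) /=.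
rewrite big_mkcond (linear_on_sum hD ad_lin); last first.
  by move=> k _; case: ifP => _; [exact/(subspaceZ hD)/D_creat_except | exact: hD.1].
congr (_ + _); apply: eq_bigr => k _; rewrite (gtn_eqF (ltn_ord k)) /=.
case: ifP => _; last exact: linear_on0 hD ad_lin.
exact/(linear_onZ hD ad_lin)/D_creat_except.
Qed.

Lemma a_creat f g n : a f (cr g n) = \sum_(k < n) ipL (cj f) (g k) *: ce g k k n.
Proof.
rewrite -(creat_except_creat g (leqnn n)) a_creat_except big_mkcond.
apply: eq_bigr => k _.
by rewrite neq_ltn ltn_ord /= creat_exceptC (creat_except_geq _ _ (leqnn n)).
Qed.

End CCR.

Lemma fock_rep_ccr (R : realType) (L F : lmodType R[i]) (ipL : L -> L -> R[i])
    (cj : L -> L) (ipF : F -> F -> R[i]) (a ad : L -> F -> F) (D : set F) (Om : F) :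
  fock_rep ipL cj ipF a ad D Om -> ccr_rep ipL cj a ad D Om.
Proof.
move=> [[[D0 DL Da Dad _] [aL adL _ _] [_ _ ccr] _ [DOm _ aOm]] _].
by constructor.
Qed.

Section DeltaAlgebra.
Context {R : realType} {L F : lmodType R[i]}.
Variables (ipL : L -> L -> R[i]) (cj : L -> L) (a ad : L -> F -> F) (D : set F) (Om : F).
Local Notation cr := (creat ad Om).
Local Notation ce := (creat_except ad Om).

Definition Delta_creat (B : L -> L) (g : nat -> L) (n : nat) : F :=
  \sum_(k < n) \sum_(l < n | l != k) ipL (cj (g l)) (B (g k)) *: ce g k l n.

Hypotheses (hipL : inner_product ipL) (hcj : conjugation ipL cj).
Hypothesis hccr : ccr_rep ipL cj a ad D Om.
Variables (A : L -> L) (e : nat -> L).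
Hypothesis A_linear : linear_on setT A.

Lemma DeltaM_linear_on M : linear_on D (DeltaM cj a A e M).
Proof.
move=> c x y Dx Dy; rewrite /DeltaM scaler_sumr -big_split; apply: eq_bigr => j _ /=.
have a_lin := ccr_linear_a hccr; have Da := ccr_domain_a hccr.
by rewrite (a_lin (cj (e j))) // (a_lin (A (e j))) //; exact: Da.
Qed.

Lemma ip_cj_sym f g : ipL (cj f) g = ipL (cj g) f.
Proof. by case: hcj => _ cjK cj_ip; rewrite -{1}(cjK g) cj_ip. Qed.

Lemma sum_ip_A_fourier M (f h : L) :
  \sum_(j < M) ipL (e j) f * ipL (cj (A (e j))) h = ipL (cj h) (A (fourier_sum ipL e M f)).
Proof.
rewrite /fourier_sum (linear_on_sum subspaceT A_linear) // (ip_sumr hipL).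
by apply: eq_bigr => j _; rewrite (linear_onZ subspaceT A_linear) // (ipZr hipL) ip_cj_sym.
Qed.

Lemma DeltaM_creatE M g n :
  DeltaM cj a A e M (cr g n) = Delta_creat (A \o fourier_sum ipL e M) g n.
Proof.
have hD := ccr_subspace hccr; have cjK : forall f, cj (cj f) = f by case: hcj.
transitivity (\sum_(j < M) \sum_(k < n) \sum_(l < n | l != k)
   (ipL (e j) (g k) * ipL (cj (A (e j))) (g l)) *: ce g k l n).
  apply: eq_bigr => j _; have a_lin := ccr_linear_a hccr (A (e j)).
  rewrite (a_creat hccr) cjK (linear_on_sum hD a_lin); last first.
    by move=> k _; exact/(subspaceZ hD)/(D_creat_except hccr).
  apply: eq_bigr => k _; rewrite (linear_onZ hD a_lin); last exact: (D_creat_except hccr).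
  rewrite (a_creat_except hccr) scaler_sumr; apply: eq_big => [l|l _] //.
  by rewrite scalerA creat_exceptC.
rewrite exchange_big; apply: eq_bigr => k _.
by rewrite exchange_big; apply: eq_bigr => l _; rewrite -scaler_suml sum_ip_A_fourier.
Qed.

End DeltaAlgebra.

Section DeltaLimit.
Context {R : realType} {L F : lmodType R[i]}.
Variables (ipL : L -> L -> R[i]) (cj : L -> L) (ipF : F -> F -> R[i])
  (a ad : L -> F -> F) (D : set F) (Om : F) (A : L -> L) (e : nat -> L).
Hypotheses (hipL : inner_product ipL) (hcj : conjugation ipL cj)
  (hipF : inner_product ipF) (hccr : ccr_rep ipL cj a ad D Om)
  (hA : bounded_op ipL A) (he : complete_ONS ipL e).

Let A_linear : linear_on setT A.
Proof. by move=> c x y _ _; case: hA => A_lin _; exact: A_lin. Qed.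

Lemma Delta_coef_vanishes (f h : L) :
  scalar_vanishes (fun M => ipL f (A (fourier_sum ipL e M h)) - ipL f (A h)).
Proof.
have [_ [k [k_ge0 A_bound]]] := hA.
have A_sq_bound x : ipL (A x) (A x) <= k ^+ 2 * ipL x x.
  rewrite -[in leRHS](sqrtCK (ipL x x)) -exprMn.
  by apply: sqr_le_of_sqrtC_le; rewrite ?mulr_ge0 ?sqrtC_ge0 ?(ip_self_ge0 hipL) ?A_bound.
move=> eps eps_gt0; set b := ipL f f * k ^+ 2.
have b_ge0 : 0 <= b by rewrite mulr_ge0 ?exprn_ge0 ?(ip_self_ge0 hipL).
have eps'_gt0 : 0 < eps / (b + 1) by rewrite divr_gt0 // ltr_wpDl.
have [N hN] := fourier_sum_vanishes hipL h he eps'_gt0.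
exists N => M le_NM; set w := h - fourier_sum ipL e M h.
have -> : ipL f (A (fourier_sum ipL e M h)) - ipL f (A h) = - ipL f (A w).
  rewrite -(ipBr hipL) -(linear_onB A_linear) // -(ipNr hipL).
  by rewrite -(linear_onN subspaceT A_linear) // opprB.
rewrite normrN; apply: le_lt_trans (cauchy_schwarz hipL _ _) _.
apply: le_lt_trans (_ : ipL f f * (k ^+ 2 * ipL w w) < eps).
  by rewrite ler_wpM2l ?(ip_self_ge0 hipL) ?A_sq_bound.
by rewrite mulrA mulrC; apply: mul_lt_of_lt_divD1; rewrite ?(ip_self_ge0 hipL) ?hN.
Qed.

Lemma DeltaM_creat_vanishes n g :
  vanishes ipF (fun M => DeltaM cj a A e M (creat ad Om g n) - Delta_creat ipL cj ad Om A g n).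
Proof.
pose coef M k l := ipL (cj (g l)) (A (fourier_sum ipL e M (g k))) - ipL (cj (g l)) (A (g k)).
have -> : (fun M => DeltaM cj a A e M (creat ad Om g n) - Delta_creat ipL cj ad Om A g n) =
    fun M => \sum_(k < n) \sum_(l < n | l != k) coef M k l *: creat_except ad Om g k l n.
  apply/funext => M; rewrite (DeltaM_creatE hipL hcj hccr e A_linear) -sumrB.
  by apply: eq_bigr => k _; rewrite -sumrB; apply: eq_bigr => l _; rewrite scalerBl.
apply: (vanishes_sum hipF) => k _; apply: (vanishes_sum hipF) => l _.
exact/(vanishesZl hipF)/Delta_coef_vanishes.
Qed.

Lemma DeltaM_creat_cvg n g :
  ip_cvg ipF (fun M => DeltaM cj a A e M (creat ad Om g n)) (Delta_creat ipL cj ad Om A g n).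
Proof. exact/(vanishes_cvg hipF)/DeltaM_creat_vanishes. Qed.

Lemma DeltaM_F0_cvg Phi : inF0 ad Om Phi ->
  exists Psi, ip_cvg ipF (fun M => DeltaM cj a A e M Phi) Psi.
Proof.
move=> [p [c [ns [gs ->]]]].
exists (\sum_(i < p) c i *: Delta_creat ipL cj ad Om A (gs i) (ns i)).
apply: (vanishes_cvg hipF); have hD := ccr_subspace hccr.
have Delta_lin := DeltaM_linear_on hccr A e.
have -> : (fun M => DeltaM cj a A e M (\sum_(i < p) c i *: creat ad Om (gs i) (ns i)) -
      \sum_(i < p) c i *: Delta_creat ipL cj ad Om A (gs i) (ns i)) =
    fun M => \sum_(i < p) c i *: (DeltaM cj a A e M (creat ad Om (gs i) (ns i)) -
      Delta_creat ipL cj ad Om A (gs i) (ns i)).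
  apply/funext => M; rewrite (linear_on_sum hD (Delta_lin M)); last first.
    by move=> i _; exact/(subspaceZ hD)/(D_creat hccr).
  rewrite -sumrB; apply: eq_bigr => i _.
  by rewrite (linear_onZ hD (Delta_lin M)) ?scalerBr //; exact: (D_creat hccr).
apply: (vanishes_sum hipF) => i _; exact/(vanishesZr hipF)/DeltaM_creat_vanishes.
Qed.

End DeltaLimit.

Theorem lemma5p5 (R : realType) (L F : lmodType R[i])
    (ipL : L -> L -> R[i]) (cj : L -> L)
    (ipF : F -> F -> R[i]) (a ad : L -> F -> F) (D : set F) (Om : F)
    (A : L -> L) (e : nat -> L) :
  hilbert ipL -> conjugation ipL cj ->
  hilbert ipF -> fock_rep ipL cj ipF a ad D Om ->
  bounded_op ipL A -> complete_ONS ipL e ->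
  (forall Phi : F, inF0 ad Om Phi ->
     exists Psi : F, ip_cvg ipF (fun M => DeltaM cj a A e M Phi) Psi) /\
  (forall (n : nat) (g : nat -> L),
     ip_cvg ipF (fun M => DeltaM cj a A e M (creat ad Om g n))
       (\sum_(k < n) \sum_(l < n | l != k)
          ipL (cj (g l)) (A (g k)) *: creat_except ad Om g k l n)).
Proof.
move=> [hipL _] hcj [hipF _] /fock_rep_ccr hccr hA he.
split=> [Phi|n g]; first exact: (DeltaM_F0_cvg hipL hcj hipF hccr hA he).
exact: (DeltaM_creat_cvg hipL hcj hipF hccr hA he).
Qed.
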